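(* Let $\theta$ be a real number with $0<\theta<\tfrac{3\pi}{2}$. In the Cartesian plane let $O=(0,0)$, let $OA$ be the positive $x$-axis, and let $OB$ be the ray from $O$ making polar angle $\theta$ with $OA$, i.e. $OB=\{t(\cos\theta,\sin\theta): t\ge 0\}$. Let $l$ be the line $y=1$. Consider points $C, D, E$ satisfying: (i) $C=(c,1)\in l$ with $c>0$; (ii) $D$ lies on the ray $OB$; (iii) $|CD|=2$ and $E$ is the midpoint of the segment $CD$; (iv) the line $OE$ is perpendicular to the line $CD$, i.e. $E\cdot(D-C)=0$; (v) $E$ lies strictly on the counterclockwise side of the line $OC$, i.e. $\det(C,E)=c\,e_2-e_1>0$ where $E=(e_1,e_2)$. Then such points $C,D,E$ exist, and for any such points the ray $OC$ has polar angle $\theta/3$ and the ray $OE$ has polar angle $2\theta/3$; that is, the rays $OC$ and $OE$ trisect the angle $\angle AOB$.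
   Context: This formalizes Scudder's carpenter's-square (T-square) trisection: the tool is a T whose top is a segment $CD$ of length $2$ and whose stem is the perpendicular to $CD$ through its midpoint $E$; the tool is placed so that the stem passes through the vertex $O$, the endpoint $C$ lies on the line parallel to $OA$ at distance $1$, and the endpoint $D$ lies on $OB$. The polar angle of a nonzero point is its argument measured counterclockwise from the positive $x$-axis. *)

From Stdlib Require Import Reals.
Open Scope R_scope.

Definition point := (R * R)%type.

Definition norm (P : point) : R := sqrt (fst P ^ 2 + snd P ^ 2).

Definition dist (P Q : point) : R := norm (fst Q - fst P, snd Q - snd P).

Definition polar_angle (P : point) (a : R) : Prop :=
  P <> (0, 0) /\ 0 <= a < 2 * PI /\
  fst P = norm P * cos a /\ snd P = norm P * sin a.

Definition on_ray (theta : R) (D : point) : Prop :=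
  exists t : R, 0 <= t /\ D = (t * cos theta, t * sin theta).

Definition midpoint (P Q : point) : point :=
  ((fst P + fst Q) / 2, (snd P + snd Q) / 2).

Definition tsquare_config (theta c : R) (D E : point) : Prop :=
  0 < c /\
  on_ray theta D /\
  dist (c, 1) D = 2 /\
  E = midpoint (c, 1) D /\
  fst E * (fst D - c) + snd E * (snd D - 1) = 0 /\
  c * snd E - fst E > 0.

(* Let phi = theta/3 and |OD| = t.  Since E is the midpoint of CD and OE is perpendicular
   to CD, O is on the perpendicular bisector of CD, so t = |OC|.  In complex notation the
   two remaining conditions (|CD| = 2 and the orientation of E) then say exactly
   t e^(i theta) (c - i) = (c + i)^2, whence (c + i)^3 = t^3 e^(i theta) = (t e^(i phi))^3.
   Cubing is injective on the open first quadrant, so C = t e^(i phi), and then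
   E = (C + D)/2 = t cos phi e^(2 i phi) = c e^(2 i phi).  Conversely t = 1/sin phi,
   c = cot phi gives a configuration. *)

From Pilot Require Import Defs.
From Stdlib Require Import Reals Lra Psatz.
Open Scope R_scope.

Lemma cos_3a (x : R) : cos (3 * x) = cos x ^ 3 - 3 * cos x * sin x ^ 2.
Proof.
  replace (3 * x) with (x + x + x) by ring.
  rewrite !cos_plus, !sin_plus; ring.
Qed.

Lemma sin_3a (x : R) : sin (3 * x) = 3 * cos x ^ 2 * sin x - sin x ^ 3.
Proof.
  replace (3 * x) with (x + x + x) by ring.
  rewrite !sin_plus, !cos_plus; ring.
Qed.

Lemma sin2_cos2_pow (x : R) : sin x ^ 2 + cos x ^ 2 = 1.
Proof. rewrite <- (sin2_cos2 x); unfold Rsqr; ring. Qed.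

Lemma norm_polar (r a : R) : 0 <= r -> norm (r * cos a, r * sin a) = r.
Proof.
  intro Hr; unfold norm; cbn [fst snd].
  replace ((r * cos a) ^ 2 + (r * sin a) ^ 2) with (r ^ 2 * (sin a ^ 2 + cos a ^ 2))
    by ring.
  rewrite sin2_cos2_pow, Rmult_1_r; exact (sqrt_pow2 r Hr).
Qed.

Lemma polar_angle_polar (r a : R) :
  0 < r -> 0 <= a < 2 * PI -> polar_angle (r * cos a, r * sin a) a.
Proof.
  intros Hr Ha; unfold polar_angle; cbn [fst snd].
  rewrite norm_polar by lra.
  split; [|tauto].
  intro H0; injection H0 as Hx Hy.
  assert (Hunit := sin2_cos2_pow a); nra.
Qed.

(* Components of z^3 - w^3 = (z - w)(z^2 + z w + w^2) for z = a + ib, w = p + iq: the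
   second factor has positive imaginary part, so it is nonzero. *)
Lemma cube_injective_quadrant (a b p q : R) :
  0 < a -> 0 < b -> 0 < p -> 0 < q ->
  a ^ 3 - 3 * a * b ^ 2 = p ^ 3 - 3 * p * q ^ 2 ->
  3 * a ^ 2 * b - b ^ 3 = 3 * p ^ 2 * q - q ^ 3 ->
  a = p /\ b = q.
Proof.
  intros Ha Hb Hp Hq Hre Him.
  set (M := a ^ 2 - b ^ 2 + (a * p - b * q) + (p ^ 2 - q ^ 2)).
  set (N := 2 * a * b + (a * q + b * p) + 2 * p * q).
  assert (HN : 0 < N) by (unfold N; nra).
  assert (Hre' : (a - p) * M - (b - q) * N = 0) by (unfold M, N; nra).
  assert (Him' : (a - p) * N + (b - q) * M = 0) by (unfold M, N; nra).
  assert (Hnorm : 0 < M * M + N * N) by nra.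
  assert (Ha' : (a - p) * (M * M + N * N) = 0).
  { transitivity (M * ((a - p) * M - (b - q) * N) + N * ((a - p) * N + (b - q) * M));
      [ring | rewrite Hre', Him'; ring]. }
  assert (Hb' : (b - q) * (M * M + N * N) = 0).
  { transitivity (- N * ((a - p) * M - (b - q) * N) + M * ((a - p) * N + (b - q) * M));
      [ring | rewrite Hre', Him'; ring]. }
  split; nra.
Qed.

Section TsquareEquations.

Variables c t u v : R.
Hypothesis Hc : 0 < c.
Hypothesis Ht : 0 <= t.
Hypothesis Huv : u ^ 2 + v ^ 2 = 1.
Hypothesis Hdist : (t * u - c) ^ 2 + (t * v - 1) ^ 2 = 4.
Hypothesis Hperp : (c + t * u) / 2 * (t * u - c) + (1 + t * v) / 2 * (t * v - 1) = 0.
Hypothesis Hdet : c * ((1 + t * v) / 2) - (c + t * u) / 2 > 0.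

Lemma tsquare_radius_sq : t ^ 2 = c ^ 2 + 1.
Proof.
  replace (t ^ 2) with (t ^ 2 * (u ^ 2 + v ^ 2)) by (rewrite Huv; ring); lra.
Qed.

Lemma tsquare_radius_pos : 0 < t.
Proof. assert (H := tsquare_radius_sq); nra. Qed.

Lemma tsquare_dot : t * (c * u + v) = c ^ 2 - 1.
Proof.
  assert (H := tsquare_radius_sq).
  replace (t ^ 2) with (t ^ 2 * (u ^ 2 + v ^ 2)) in H by (rewrite Huv; ring); lra.
Qed.

Lemma tsquare_cross : t * (c * v - u) = 2 * c.
Proof.
  assert (Hpos : t * (c * v - u) > 0) by lra.
  assert (Hsq : (t * (c * v - u)) ^ 2 = (2 * c) ^ 2).
  { replace ((t * (c * v - u)) ^ 2)
      with (t ^ 2 * ((c ^ 2 + 1) * (u ^ 2 + v ^ 2)) - (t * (c * u + v)) ^ 2) by ring.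
    rewrite Huv, tsquare_dot, tsquare_radius_sq; ring. }
  assert (Hfact : (t * (c * v - u) - 2 * c) * (t * (c * v - u) + 2 * c) = 0).
  { transitivity ((t * (c * v - u)) ^ 2 - (2 * c) ^ 2); [ring | rewrite Hsq; ring]. }
  destruct (Rmult_integral _ _ Hfact); lra.
Qed.

Lemma tsquare_cube_cos : t ^ 3 * u = c ^ 3 - 3 * c.
Proof.
  replace (t ^ 3 * u) with (t ^ 2 * (t * u)) by ring.
  rewrite tsquare_radius_sq.
  replace ((c ^ 2 + 1) * (t * u)) with (c * (t * (c * u + v)) - t * (c * v - u)) by ring.
  rewrite tsquare_dot, tsquare_cross; ring.
Qed.

Lemma tsquare_cube_sin : t ^ 3 * v = 3 * c ^ 2 - 1.
Proof.
  replace (t ^ 3 * v) with (t ^ 2 * (t * v)) by ring.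
  rewrite tsquare_radius_sq.
  replace ((c ^ 2 + 1) * (t * v)) with (t * (c * u + v) + c * (t * (c * v - u))) by ring.
  rewrite tsquare_dot, tsquare_cross; ring.
Qed.

End TsquareEquations.

Lemma tsquare_config_exists (theta : R) :
  0 < theta < 3 * PI / 2 -> exists (c : R) (D E : point), tsquare_config theta c D E.
Proof.
  intro Htheta; assert (HPI := PI_RGT_0).
  set (phi := theta / 3).
  assert (Hq : 0 < sin phi) by (apply sin_gt_0; unfold phi; lra).
  assert (Hp : 0 < cos phi) by (apply cos_gt_0; unfold phi; lra).
  assert (Hsin2 : 0 < sin (2 * phi)) by (apply sin_gt_0; unfold phi; lra).
  assert (Hdiff : theta - phi = 2 * phi) by (unfold phi; field).
  assert (Hcos_diff := cos_minus theta phi); assert (Hsin_diff := sin_minus theta phi).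
  rewrite Hdiff in Hcos_diff, Hsin_diff.
  assert (Hcos2 := cos_2a_sin phi).
  assert (Hunit := sin2_cos2_pow theta); assert (Hunit' := sin2_cos2_pow phi).
  set (t := / sin phi).
  assert (Ht : 0 < t) by (apply Rinv_0_lt_compat; lra).
  assert (Htq : t * sin phi = 1) by (unfold t; field; lra).
  exists (t * cos phi), (t * cos theta, t * sin theta),
    (midpoint (t * cos phi, 1) (t * cos theta, t * sin theta)).
  unfold tsquare_config, on_ray, Defs.dist, norm, midpoint; cbn [fst snd].
  rewrite <- Htq.
  split; [nra|]. split; [exists t; split; [lra | reflexivity]|].
  split; [|split; [reflexivity | split]].
  - replace ((t * cos theta - t * cos phi) ^ 2 + (t * sin theta - t * sin phi) ^ 2)
      with (2 ^ 2) by nra.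
    apply sqrt_pow2; lra.
  - nra.
  - replace (t * cos phi * ((t * sin phi + t * sin theta) / 2) -
      (t * cos phi + t * cos theta) / 2) with (t ^ 2 * sin (2 * phi) / 2).
    + apply Rdiv_lt_0_compat; [apply Rmult_lt_0_compat|]; nra.
    + assert (Hcp : t * cos phi * (t * sin phi) = t * cos phi) by (rewrite Htq; ring).
      assert (Hct : t * cos theta * (t * sin phi) = t * cos theta) by (rewrite Htq; ring).
      rewrite Hsin_diff; lra.
Qed.

Lemma tsquare_config_trisects (theta c : R) (D E : point) :
  0 < theta < 3 * PI / 2 -> tsquare_config theta c D E ->
  polar_angle (c, 1) (theta / 3) /\ polar_angle E (2 * theta / 3).
Proof.
  intros Htheta [Hc [[t [Ht ->]] [Hdist [-> [Hperp Hdet]]]]].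
  unfold Defs.dist, norm, midpoint in *; cbn [fst snd] in *.
  assert (HPI := PI_RGT_0).
  apply sqrt_lem_0 in Hdist; [| nra | lra].
  replace (2 * 2) with 4 in Hdist by ring; symmetry in Hdist.
  assert (Hunit := sin2_cos2_pow theta).
  assert (Huv : cos theta ^ 2 + sin theta ^ 2 = 1) by lra.
  set (phi := theta / 3) in *.
  assert (H3 : theta = 3 * phi) by (unfold phi; field).
  assert (Hp : 0 < cos phi) by (apply cos_gt_0; unfold phi; lra).
  assert (Hq : 0 < sin phi) by (apply sin_gt_0; unfold phi; lra).
  assert (Htpos := tsquare_radius_pos c t _ _ Hc Ht Huv Hperp).
  assert (Hcube_cos := tsquare_cube_cos c t _ _ Hc Huv Hdist Hperp Hdet).
  assert (Hcube_sin := tsquare_cube_sin c t _ _ Hc Huv Hdist Hperp Hdet).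
  assert (Hcube : c = t * cos phi /\ 1 = t * sin phi).
  { apply cube_injective_quadrant; [lra | lra | nra | nra | |].
    - transitivity (t ^ 3 * cos theta); [rewrite Hcube_cos; ring|].
      rewrite H3, cos_3a; ring.
    - transitivity (t ^ 3 * sin theta); [rewrite Hcube_sin; ring|].
      rewrite H3, sin_3a; ring. }
  destruct Hcube as [Hcp H1q].
  split.
  - rewrite Hcp, H1q; apply polar_angle_polar; unfold phi; lra.
  - replace (2 * theta / 3) with (2 * phi) by (unfold phi; field).
    assert (Hsum_cos := form1 theta phi); assert (Hsum_sin := form3 theta phi).
    replace ((theta - phi) / 2) with phi in Hsum_cos, Hsum_sin by lra.
    replace ((theta + phi) / 2) with (2 * phi) in Hsum_cos, Hsum_sin by lra.
    replace ((c + t * cos theta) / 2, (1 + t * sin theta) / 2)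
      with (c * cos (2 * phi), c * sin (2 * phi)).
    + apply polar_angle_polar; unfold phi; lra.
    + rewrite Hcp, H1q; f_equal; nra.
Qed.

Theorem mainTheorem1 (theta : R) (Htheta : 0 < theta < 3 * PI / 2) :
  (exists (c : R) (D E : point), tsquare_config theta c D E) /\
  (forall (c : R) (D E : point), tsquare_config theta c D E ->
     polar_angle (c, 1) (theta / 3) /\ polar_angle E (2 * theta / 3)).
Proof.
  split.
  - exact (tsquare_config_exists theta Htheta).
  - intros c D E Hconf; exact (tsquare_config_trisects theta c D E Htheta Hconf).
Qed.
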